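(* Let $\Lambda_{[m!]}=\{\{1,2,\dots,m!\}:m\in\mathbb N\}\subseteq\mathcal P_{fin}(\mathbb N)$, let $I$ be a fine ideal of $\mathfrak F(\mathcal P_{fin}(\mathbb N),\mathbb R)$ containing $I_{0,\Lambda_{[m!]}}$, and let $P$ be the probability of the NAP-space produced by $(\mathbb N,1,I)$. Then for every $k\in\mathbb N$ and every $l\in\{0,1,\dots,k-1\}$, the set $\mathbb N_{k,l}=\{nk-l:n\in\mathbb N\}$ satisfies $P(\mathbb N_{k,l})=1/k$ exactly. In particular $P(\{k,2k,3k,\dots\})=1/k$.
   Context: $\mathbb N=\{1,2,3,\dots\}$. $\mathcal P_{fin}(\Omega)$ is the set of finite subsets of $\Omega$ and $\mathfrak F=\mathfrak F(\mathcal P_{fin}(\Omega),\mathbb R)$ the real algebra of functions $\mathcal P_{fin}(\Omega)\to\mathbb R$ with pointwise operations. For $\omega\in\Omega$, $\chi_\lambda(\omega)=1$ if $\omega\in\lambda$, else $0$. An ideal $I$ of $\mathfrak F$ is fine if it is maximal and $\lambda\mapsto 1-\chi_\lambda(\omega)$ lies in $I$ for every $\omega\in\Omega$. For $\Lambda\subseteq\mathcal P_{fin}(\Omega)$, $I_{0,\Lambda}=\{\varphi\in\mathfrak F:\varphi(\lambda)=0\text{ for all }\lambda\in\Lambda\}$. The NAP-space produced by $(\Omega,w,I)$ ($w:\Omega\to\mathbb R^+$, $I$ fine) has range field $\mathfrak F/I$, $J$ the canonical projection $\varphi\mapsto\varphi+I$, and $P(A)=J\big(\lambda\mapsto\sum_{\omega\in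 A\cap\lambda}w(\omega)\big)/J\big(\lambda\mapsto\sum_{\omega\in\lambda}w(\omega)\big)$. *)

From mathcomp Require Import all_boot.
From Stdlib Require Import Reals ClassicalEpsilon.

Set Implicit Arguments.
Unset Strict Implicit.
Unset Printing Implicit Defensive.

(* Omega = N = {1,2,3,...}, represented by the positive elements of nat. *)

(* A finite subset of N is represented canonically by the strictly
   increasing list of its elements (all positive).  Two such lists are
   equal iff they denote the same set, so Pfin is exactly P_fin(N). *)
Definition is_pfin (s : seq nat) : bool :=
  sorted ltn s && all (fun n => (0 < n)%N) s.

Definition Pfin : Type := {s : seq nat | is_pfin s}.

Definition FF : Type := Pfin -> R.

Definition fconst (c : R) : FF := fun _ => c.
Definition fadd (f g : FF) : FF := fun x => (f x + g x)%R.
Definition fmul (f g : FF) : FF := fun x => (f x * g x)%R.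

Definition chi (lam : Pfin) (w : nat) : R :=
  if w \in sval lam then 1%R else 0%R.

Definition is_ideal (I : FF -> Prop) : Prop :=
  I (fconst 0) /\
  (forall f g, I f -> I g -> I (fadd f g)) /\
  (forall f g, I g -> I (fmul f g)).

Definition maximal_ideal (I : FF -> Prop) : Prop :=
  is_ideal I /\ ~ I (fconst 1) /\
  forall J : FF -> Prop, is_ideal J -> (forall f, I f -> J f) ->
    (forall f, J f -> I f) \/ J (fconst 1).

Definition fine (I : FF -> Prop) : Prop :=
  maximal_ideal I /\
  forall w : nat, (0 < w)%N -> I (fun lam => (1 - chi lam w)%R).

Definition I0 (Lam : Pfin -> Prop) : FF -> Prop :=
  fun phi => forall lam, Lam lam -> phi lam = 0%R.

Definition Lam_fact : Pfin -> Prop :=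
  fun lam => exists m : nat, (0 < m)%N /\ sval lam = iota 1 (m `!).

Definition wsum (w : nat -> R) (A : nat -> Prop) : FF :=
  fun lam => foldr (fun x acc =>
                      ((if excluded_middle_informative (A x) then w x else 0)
                       + acc)%R) 0%R (sval lam).

(* "P(A) = c" in the NAP-space produced by (N, w, I), for c a real number
   (embedded in F/I as J of the constant function c).
   P(A) = J(num_A) / J(den) where den = wsum w N.  This says: J(den) is
   nonzero (so the quotient is defined) and J(num_A) = J(c) * J(den),
   i.e. num_A - c * den lies in I. *)
Definition NAP_P_eq (I : FF -> Prop) (w : nat -> R) (A : nat -> Prop) (c : R)
  : Prop :=
  let den := wsum w (fun n => (0 < n)%N) in
  ~ I den /\ I (fun lam => (wsum w A lam - c * den lam)%R).

Definition Nkl (k l : nat) : nat -> Prop :=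
  fun x => exists n : nat, (0 < n)%N /\ x = (n * k - l)%N.

From mathcomp Require Import all_boot.
From Stdlib Require Import Reals ClassicalEpsilon FunctionalExtensionality Lra.
From mathcomp Require Import zify.

(* With weight 1 the numerator and denominator of P(N_{k,l})
   evaluated at a finite set lam are the counts of elements of lam lying in
   N_{k,l}, resp. of all elements of lam.  On an initial segment {1,...,qk}
   exactly q of the qk elements lie in N_{k,l}, so numerator - den/k
   vanishes there; and every m! with m >= k is such a multiple of k.
   On the ideal side:
   - the denominator is not in I, since den + (1 - chi_1) is positive
     everywhere, hence a unit, and a proper ideal contains no unit;
   - an ideal containing I_{0,Lam} and all 1 - chi_w contains every function
     vanishing on the members of Lam that contain w (split phi as
     phi (1 - chi_w) + phi chi_w).
   Taking w = k! + 1, the members {1,...,m!} of Lam_[m!] containing w have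
   m > k, so numerator - den/k lies in I, i.e. P(N_{k,l}) = 1/k. *)

Lemma wsum_one_count (A : nat -> Prop) (p : pred nat) (lam : Pfin) :
  (forall x, A x <-> p x) -> wsum (fun _ => 1%R) A lam = INR (count p (sval lam)).
Proof.
move=> HA; rewrite /wsum; elim: (sval lam) => [|x s IH] //.
rewrite [foldr _ _ _]/= IH (_ : count p (x :: s) = p x + count p s) //.
case: excluded_middle_informative => Ax /=; have := HA x; case: (p x) => -[AP PA].
- by rewrite add1n S_INR; lra.
- by have := AP Ax.
- by have := Ax (PA isT).
- by rewrite add0n; lra.
Qed.

Definition Nkl_pred (k l : nat) : pred nat := fun x => (0 < x) && (k %| x + l).

Lemma Nkl_predP (k l x : nat) :
  (0 < k)%N -> (l < k)%N -> Nkl k l x <-> Nkl_pred k l x.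
Proof.
move=> k0 lk; split.
- move=> [n [n0 ->]]; have kn : (k <= n * k)%N by rewrite leq_pmull.
  apply/andP; split; first lia.
  have -> : (n * k - l + l = n * k)%N by lia.
  exact: dvdn_mull.
- move=> /andP [x0 /dvdnP [[|n] hn]]; first lia.
  by exists n.+1; split; lia.
Qed.

(* Each block {1,...,k} contains exactly one element of N_{k,l}, namely k - l. *)
Lemma count_Nkl_block (k l : nat) :
  (0 < k)%N -> (l < k)%N -> count (Nkl_pred k l) (iota 1 k) = 1%N.
Proof.
move=> k0 lk; rewrite (@eq_in_count _ _ (pred1 (k - l))).
  by rewrite count_uniq_mem ?iota_uniq // mem_iota; apply/eqP; lia.
move=> x; rewrite mem_iota => /andP [x1 xk] /=; apply/idP/eqP.
- by move=> /andP [_ /dvdnP [[|[|c]] hc]]; lia.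
- move=> ->; apply/andP; split; first lia.
  by have -> : (k - l + l = k)%N by lia.
Qed.

(* N_{k,l} is invariant under translation by multiples of k, so
   {1,...,qk} contains exactly q of its elements. *)
Lemma count_Nkl_iota (k l q : nat) :
  (0 < k)%N -> (l < k)%N -> count (Nkl_pred k l) (iota 1 (q * k)) = q.
Proof.
move=> k0 lk; elim: q => [|q IH]; first by rewrite mul0n.
rewrite mulSn addnC iotaD count_cat IH -[(1 + q * k)%N]addnC iotaDl count_map.
rewrite (@eq_in_count _ _ (Nkl_pred k l)) ?count_Nkl_block ?addn1 //.
move=> x; rewrite mem_iota => /andP [x1 _] /=; rewrite /Nkl_pred.
rewrite -addnA dvdn_addr ?dvdn_mull // x1.
by have -> : (0 < q * k + x)%N by lia.
Qed.

Lemma den_one_size (lam : Pfin) :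
  wsum (fun _ => 1%R) (fun n => (0 < n)%N) lam = INR (size (sval lam)).
Proof.
rewrite (@wsum_one_count _ (fun n => 0 < n)%N) //.
by case/andP: (svalP lam) => _; rewrite all_count => /eqP ->.
Qed.

Lemma Nkl_frequency_exact (k l q : nat) (lam : Pfin) :
  (0 < k)%N -> (l < k)%N -> sval lam = iota 1 (q * k) ->
  (wsum (fun _ => 1%R) (Nkl k l) lam
   - 1 / INR k * wsum (fun _ => 1%R) (fun n => (0 < n)%nat) lam)%R = 0%R.
Proof.
move=> k0 lk hlam.
rewrite (@wsum_one_count _ (Nkl_pred k l)) => [|x]; last exact: Nkl_predP.
rewrite den_one_size hlam count_Nkl_iota // size_iota mult_INR.
have : INR k <> 0%R by apply: not_0_INR; lia.
by move=> kn0; field.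
Qed.

(* A proper ideal contains no function that vanishes nowhere: such a
   function is a unit of the pointwise algebra. *)
Lemma proper_ideal_no_unit (I : FF -> Prop) (f : FF) :
  is_ideal I -> ~ I (fconst 1) -> (forall lam, f lam <> 0%R) -> ~ I f.
Proof.
move=> [_ [_ Imul]] I1 fnz If; apply: I1.
have -> : fconst 1 = fmul (fun lam => / f lam)%R f.
  by apply: functional_extensionality => lam; rewrite /fconst /fmul Rinv_l.
exact: Imul.
Qed.

(* For a fine ideal the denominator den(lam) = |lam| is not in I, because
   den + (1 - chi_1) is at least 1 everywhere. *)
Lemma fine_den_notin (I : FF -> Prop) :
  fine I -> ~ I (wsum (fun _ => 1%R) (fun n => (0 < n)%N)).
Proof.
move=> [[Iid [I1 _]] Ichi] Iden.
set f := fadd (wsum (fun _ => 1%R) (fun n => (0 < n)%N)) (fun lam => (1 - chi lam 1)%R).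
apply: (@proper_ideal_no_unit I f Iid I1).
- move=> lam; rewrite /f /fadd den_one_size /chi.
  case: ifP => h1.
  + have : (0 < size (sval lam))%N by case: (sval lam) h1.
    by move=> /ltP /lt_INR /= h; lra.
  + by have := pos_INR (size (sval lam)); lra.
- by case: Iid => [_ [Iadd _]]; apply: Iadd => //; apply: Ichi.
Qed.

(* An ideal containing I_{0,Lam} and 1 - chi_w contains every function that
   vanishes on the members of Lam containing w: write
   phi = phi (1 - chi_w) + phi chi_w, the second summand being in I_{0,Lam}. *)
Lemma ideal_vanish_on_trace (I : FF -> Prop) (Lam : Pfin -> Prop) (w : nat) (phi : FF) :
  is_ideal I -> (forall psi, I0 Lam psi -> I psi) ->
  I (fun lam => (1 - chi lam w)%R) ->
  (forall lam, Lam lam -> w \in sval lam -> phi lam = 0%R) -> I phi.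
Proof.
move=> [_ [Iadd Imul]] HI0 Ichi Hphi.
have -> : phi = fadd (fmul phi (fun lam => (1 - chi lam w)%R))
                     (fmul phi (fun lam => chi lam w)).
  by apply: functional_extensionality => lam; rewrite /fadd /fmul; ring.
apply: Iadd; first exact: Imul.
apply: HI0 => lam Llam; rewrite /fmul /chi.
by case: ifP => hw; [rewrite Hphi // Rmult_1_r | rewrite Rmult_0_r].
Qed.

(* If {1,...,m!} contains k! + 1 then m! > k!, hence m >= k and k divides m!. *)
Lemma fact_segment_multiple (k m : nat) :
  (0 < k)%N -> (k`! + 1 \in iota 1 (m`!)) -> exists q, m`! = (q * k)%N.
Proof.
move=> k0; rewrite mem_iota => /andP [_ hw].
have km : (k <= m)%N.
  rewrite leqNgt; apply/negP => mk.
  by have := leq_fact (ltnW mk : (m <= k)%N); lia.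
by apply/dvdnP; apply: dvdn_fact; apply/andP; split.
Qed.

Theorem mainTheorem13 (I : FF -> Prop) :
  fine I ->
  (forall phi, I0 Lam_fact phi -> I phi) ->
  forall k l : nat, (0 < k)%N -> (l < k)%N ->
    NAP_P_eq I (fun _ => 1%R) (Nkl k l) (1 / INR k)%R.
Proof.
move=> Ifine HI0 k l k0 lk; split; first exact: fine_den_notin.
have [[Iid _] Ichi] := Ifine.
apply: (@ideal_vanish_on_trace I Lam_fact (k`! + 1)) => //.
- by apply: Ichi; rewrite addn1.
- move=> lam [m [_ hlam]]; rewrite hlam => hw.
  have [q hq] := @fact_segment_multiple k m k0 hw.
  by apply: (@Nkl_frequency_exact k l q lam k0 lk); rewrite hlam hq.
Qed.
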